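(* Let $\Theta_n$ be a parameter space with norm $\|\cdot\|$, let ${\boldsymbol X}_n$ denote data of sample size $n$, and for $t=1,\ldots,T$ let $Q_t(\theta,{\boldsymbol X}_n)$ be random functions of $\theta\in\Theta_n$. Suppose: (B1) for each $t$, $Q_t(\theta,{\boldsymbol X}_n)$ is continuous in $\theta$, and there is a function $Q_t^*(\theta)$, continuous in $\theta$ and uniquely maximized at $\theta_*^{(t)}$; (B2) for any $\epsilon>0$, $\sup_{\theta\in\Theta_n\setminus B_t(\epsilon)}Q_t^*(\theta)$ exists, where $B_t(\epsilon)=\{\theta:\|\theta-\theta_*^{(t)}\|<\epsilon\}$, and with $\delta_t=Q_t^*(\theta_*^{(t)})-\sup_{\theta\in\Theta_n\setminus B_t(\epsilon)}Q_t^*(\theta)$ one has $\delta=\min_{1\le t\le T}\delta_t>0$; (B3) $\sup_{1\le t\le T}\sup_{\theta\in\Theta_n}|Q_t(\theta,{\boldsymbol X}_n)-Q_t^*(\theta)|\to_p0$ as $n\to\infty$; (B4) the penalty function $P_{\lambda_n}(\theta)$ is non-negative and converges to $0$ uniformly over the set $\{\theta_*^{(t)}:t=1,\ldots,T\}$ as $n\to\infty$, where $\lambda_n$ is a regularization parameter possibly depending on $n$. Let $\theta_n^{(t)}=\arg\max_{\theta\in\Theta_n}\{Q_t(\theta,{\boldsymbol X}_n)-P_{\lambda_n}(\theta)\}$. Then $\sup_{1\le t\le T}\|\theta_n^{(t)}-\theta_*^{(t)}\|\to_p0$. *)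

From HB Require Import structures.
From mathcomp Require Import all_boot all_order all_algebra.
From mathcomp Require Import all_classical all_reals all_analysis.
Set Implicit Arguments. Unset Strict Implicit. Unset Printing Implicit Defensive.
Import Order.TTheory GRing.Theory Num.Theory.
Import numFieldNormedType.Exports.
Local Open Scope classical_set_scope.
Local Open Scope ring_scope.

(* Convergence in (outer) probability to 0 of a sequence of possibly
   non-measurable, NONNEGATIVE (sups of norms) extended-real-valued random quantities Y n : Omega -> \bar R:
   for every eps > 0, the outer probability of [Y n >= eps] tends to 0,
   i.e. for every eta > 0, eventually the event is covered by a measurable
   set of probability at most eta. *)
Definition cvg_outer_prob0 {d} {Omega : measurableType d} {R : realType}
  (P : probability Omega R) (Y : nat -> Omega -> \bar R) : Prop :=
  forall eps : R, 0 < eps -> forall eta : R, 0 < eta ->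
    \forall n \near \oo, exists B : set Omega,
      [/\ measurable B, [set w | (eps%:E <= Y n w)%E] `<=` B & (P B <= eta%:E)%E].

From HB Require Import structures.
From mathcomp Require Import all_boot all_order all_algebra.
From mathcomp Require Import all_classical all_reals all_analysis.
From mathcomp Require Import lra.
Import Order.TTheory GRing.Theory Num.Theory.
Import numFieldNormedType.Exports.
Local Open Scope classical_set_scope.
Local Open Scope ring_scope.

(* Let delta be the separation gap of (B2) for eps/2.  Once the penalty at
   every true maximizer is below delta/3, on the event where the uniform error
   of (B3) is below delta/3 each penalized argmax is eps/2-close to its target:
   were it farther, its Q_t^* value would be at least delta below the maximum,
   whereas comparing the penalized criteria at the argmax and at the true
   maximizer bounds that deficit strictly by delta/3 + delta/3 + delta/3.
   So the event of an eps-far argmax lies inside that of a delta/3-large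
   uniform error, whose outer probability vanishes. *)

Section PenalizedArgmax.
Context {R : realType} {V : normedModType R}.

Definition well_separated_max (A : set V) (g : V -> R) (x0 : V) (eps delta : R) :=
  forall y, A y -> eps <= `|y - x0| -> g y + delta <= g x0.

Lemma well_separated_max_sup_gap {A : set V} {g : V -> R} {x0 : V} {eps delta : R} :
  (let S := [set g y | y in A `\` [set y | `|y - x0| < eps]] in
   S !=set0 -> has_sup S /\ delta <= g x0 - sup S) ->
  well_separated_max A g x0 eps delta.
Proof.
move=> gap y Ay far.
have Sy : [set g y | y in A `\` [set y | `|y - x0| < eps]] (g y).
  by exists y => //; split => //=; rewrite ltNge far.
have [supS gap_y] := gap (ex_intro _ _ Sy).
have := sup_upper_bound supS Sy; lra.
Qed.

Lemma penalized_argmax_near {A : set V} (f g pen : V -> R) {x0 x : V}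
    {eps delta e : R} :
  well_separated_max A g x0 eps delta ->
  (forall y, A y -> `|f y - g y| < e) ->
  2 * e + pen x0 <= delta -> 0 <= pen x ->
  A x0 -> A x -> (forall y, A y -> f y - pen y <= f x - pen x) ->
  `|x - x0| < eps.
Proof.
move=> sep close small pen_x Ax0 Ax argmax_x.
rewrite ltNge; apply/negP => /(sep _ Ax) far.
have := argmax_x _ Ax0.
move: (close _ Ax) (close _ Ax0); rewrite !ltr_norml => /andP[? ?] /andP[? ?].
lra.
Qed.

End PenalizedArgmax.

Lemma cvg_outer_prob0_dominated {d} {Omega : measurableType d} {R : realType}
    (P : probability Omega R) (Y Z : nat -> Omega -> \bar R) :
  (forall eps : R, 0 < eps -> exists2 e : R, 0 < e &
     \forall n \near \oo, forall w, (eps%:E <= Z n w)%E -> (e%:E <= Y n w)%E) ->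
  cvg_outer_prob0 P Y -> cvg_outer_prob0 P Z.
Proof.
move=> dom cvgY eps eps0 eta eta0.
have [e e0 ZY] := dom eps eps0.
apply: filterS2 ZY (cvgY e e0 eta eta0) => n ZY [B [mB YB PB]].
by exists B; split => // w /ZY /YB.
Qed.

Theorem lemma1
  (R : realType) (d : measure_display) (Omega : measurableType d)
  (P : probability Omega R)
  (V : normedModType R) (Theta : nat -> set V) (T : nat)
  (Q : nat -> 'I_T -> V -> Omega -> R)   (* Q n t theta w = Q_t(theta, X_n(w)) *)
  (Qs : 'I_T -> V -> R)                   (* Q_t^* *)
  (thetas : 'I_T -> V)                    (* theta_*^(t) *)
  (Pen : R -> V -> R) (lam : nat -> R)    (* P_lambda(theta), lambda_n *)
  (thetan : nat -> 'I_T -> Omega -> V)    (* theta_n^(t) *)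
  (* (B1) *)
  (B1_Qcont : forall n t w, {within Theta n, continuous (fun th => Q n t th w)})
  (B1_Qscont : forall t, continuous (Qs t))
  (B1_max : forall n t, Theta n (thetas t) /\
      forall th, Theta n th -> th <> thetas t -> Qs t th < Qs t (thetas t))
  (* (B2) *)
  (B2 : forall eps : R, 0 < eps -> exists2 delta : R, 0 < delta &
      forall n t,
        let S := [set Qs t th | th in Theta n `\` [set th | `|th - thetas t| < eps]] in
        S !=set0 -> has_sup S /\ delta <= Qs t (thetas t) - sup S)
  (* (B3) *)
  (B3 : cvg_outer_prob0 P (fun n w =>
      ereal_sup [set (`|Q n tth.1 tth.2 w - Qs tth.1 tth.2|)%:E
                 | tth in [set tth : 'I_T * V | Theta n tth.2]]))
  (* (B4) *)
  (B4_nonneg : forall n th, 0 <= Pen (lam n) th)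
  (B4_cvg : forall e : R, 0 < e ->
      \forall n \near \oo, forall t, `|Pen (lam n) (thetas t)| < e)
  (* theta_n^(t) is an argmax of Q_t - P_lambda_n over Theta_n *)
  (argmax : forall n t w, Theta n (thetan n t w) /\
      forall th, Theta n th ->
        Q n t th w - Pen (lam n) th <= Q n t (thetan n t w) w - Pen (lam n) (thetan n t w)) :
  cvg_outer_prob0 P (fun n w =>
      ereal_sup [set (`|thetan n t w - thetas t|)%:E | t in [set: 'I_T]]).
Proof.
apply: cvg_outer_prob0_dominated B3 => eps eps0.
have [delta delta0 gap] := B2 (eps / 2) ltac:(by rewrite divr_gt0).
have delta30 : 0 < delta / 3 by rewrite divr_gt0.
exists (delta / 3) => //.
apply: filterS (B4_cvg _ delta30) => n pen_small w.
apply: contraPP => /negP; rewrite -ltNge => sup_err_small.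
have near_t t : `|thetan n t w - thetas t| < eps / 2.
  have [Ttn argmax_t] := argmax n t w.
  apply: (penalized_argmax_near (Q n t ^~ w) (Qs t) (Pen (lam n)) (e := delta / 3)
            (well_separated_max_sup_gap (gap n t))) argmax_t => //.
  - move=> th Tth; rewrite -lte_fin; apply: le_lt_trans sup_err_small.
    by apply: ereal_sup_ubound; exists (t, th).
  - by have := pen_small t; rewrite ltr_norml; lra.
  - exact: (B1_max n t).1.
apply/negP; rewrite -ltNge; apply: (@le_lt_trans _ _ (eps / 2)%:E).
  by apply: ge_ereal_sup => _ [t _ <-]; rewrite lee_fin ltW.
by rewrite lte_fin; lra.
Qed.
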